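(* For every graph $G$ with $\chi(G)>3$, $W(G)>\frac{1}{16}\,g(G)$.
   Context: $\chi(G)$ is the chromatic number and $g(G)$ the girth (minimum length of a cycle) of $G$; $K_3$ is the complete graph on 3 vertices. Graphs are viewed as structures with adjacency relation $E$ and equality. For a graph $G$ with $\chi(G)>3$, $W(G)$ is the least $k$ such that some existential-positive first-order sentence (built from atomic formulas $x=y$, $E(x,y)$ using only $\wedge$, $\vee$ and $\exists$) in which at most $k$ distinct variables occur is true in $G$ and false in $K_3$. Equivalently, $W(G)$ is the least $k$ such that for some $r$ Spoiler has a winning strategy in the $r$-round $k$-width 3-coloring game on $G$: in each round Spoiler may erase the colors of some colored vertices and then selects a vertex, which Duplicator colors red, blue or green; at most $k$ vertices may be colored after each round; Duplicator wins if after every round the partial coloring is proper. *)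

From mathcomp Require Import all_boot.
Set Implicit Arguments. Unset Strict Implicit. Unset Printing Implicit Defensive.

(* A (finite, simple) graph: vertex type T : finType with adjacency e : rel T,
   required (in the theorem) to be symmetric and irreflexive. *)

Definition colorable (T : finType) (e : rel T) (n : nat) : Prop :=
  exists c : T -> 'I_n, forall x y, e x y -> c x != c y.

Definition has_cycle_of_length (T : finType) (e : rel T) (l : nat) : Prop :=
  exists p : seq T, [/\ size p = l, 3 <= l, uniq p & cycle e p].

Definition is_girth (T : finType) (e : rel T) (g : nat) : Prop :=
  has_cycle_of_length e g /\ forall l, has_cycle_of_length e l -> g <= l.

Inductive epf : Type :=
| EPEq   : nat -> nat -> epf
| EPEdge : nat -> nat -> epf
| EPAnd  : epf -> epf -> epf
| EPOr   : epf -> epf -> epf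
| EPEx   : nat -> epf -> epf.

Fixpoint holds (T : Type) (e : rel T) (s : nat -> T) (f : epf) : Prop :=
  match f with
  | EPEq x y => s x = s y
  | EPEdge x y => e (s x) (s y)
  | EPAnd f1 f2 => holds e s f1 /\ holds e s f2
  | EPOr f1 f2 => holds e s f1 \/ holds e s f2
  | EPEx x f1 => exists a : T, holds e (fun z => if z == x then a else s z) f1
  end.

Fixpoint vars (f : epf) : seq nat :=
  match f with
  | EPEq x y | EPEdge x y => [:: x; y]
  | EPAnd f1 f2 | EPOr f1 f2 => vars f1 ++ vars f2
  | EPEx x f1 => x :: vars f1
  end.

Fixpoint free_vars (f : epf) : seq nat :=
  match f with
  | EPEq x y | EPEdge x y => [:: x; y]
  | EPAnd f1 f2 | EPOr f1 f2 => free_vars f1 ++ free_vars f2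
  | EPEx x f1 => filter (fun z => z != x) (free_vars f1)
  end.

Definition is_sentence (f : epf) : Prop := free_vars f = [::].

Definition num_vars (f : epf) : nat := size (undup (vars f)).

(* A sentence is true in (T, e); for sentences the assignment is irrelevant,
   we use "for every assignment". *)
Definition sat (T : Type) (e : rel T) (f : epf) : Prop :=
  forall s : nat -> T, holds e s f.

Definition K3 : rel 'I_3 := fun x y => x != y.

Definition W_witness (T : finType) (e : rel T) (k : nat) : Prop :=
  exists f : epf, [/\ is_sentence f, num_vars f <= k, sat e f & ~ sat K3 f].

Definition is_W (T : finType) (e : rel T) (w : nat) : Prop :=
  W_witness e w /\ forall k, W_witness e k -> w <= k.

From mathcomp Require Import all_boot.
From mathcomp Require Import zify.
From Stdlib Require Import Classical.
Set Implicit Arguments. Unset Strict Implicit. Unset Printing Implicit Defensive.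

(* Let G have girth g and suppose 16 W(G) <= g; we show that
   every existential-positive sentence with at most w = W(G) variables that is
   true in G is true in K_3, contradicting the definition of W(G).

   A vertex set Z with |Z| < g induces a forest, so it has a
      vertex of degree <= 1 in Z and the degrees in Z sum to at most 2|Z|.
   2. Extending 3-colourings.  A colouring of S extends to X u S, for |X u S| < g,
      as soon as it extends to Y u S for every small Y (|Y| <= 2|S|): peel off
      vertices of degree <= 2, and by the degree bound at most 2|S| vertices of
      degree >= 3 remain.  Call a colouring of S M-robust if it extends to
      X u S for every |X| <= M; a robust colouring can be extended to one more
      vertex (with a colour that works against all three candidate refutations).
   3. Duplicator's strategy.  Maintain an M-robust colouring c of the vertices
      currently named by the G-assignment, with the K_3-assignment equal to c
      composed with it; by induction on the formula, satisfaction transfers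
      from G to K_3.  With M = 2w this needs only 7w < g. *)

Section SparseGraphs.

Variables (T : finType) (e : rel T).
Hypotheses (e_sym : symmetric e) (e_irr : irreflexive e).
Variable g : nat.
Hypothesis girth_ge : forall l, has_cycle_of_length e l -> g <= l.

Definition deg (Z : {set T}) (x : T) : nat := #|[set y in Z | e x y]|.

Lemma uniq_size_le_card (Z : {set T}) (s : seq T) :
  uniq s -> all (mem Z) s -> size s <= #|Z|.
Proof.
move=> us /allP sZ; rewrite -(card_uniqP us); apply: subset_leq_card.
by apply/subsetP => x /sZ.
Qed.

Lemma path_no_chord (Z : {set T}) x q y :
  #|Z| < g -> x \in Z -> all (mem Z) q -> uniq (x :: q) -> path e x q ->
  y \in q -> e x y -> exists q2, q = y :: q2.
Proof.
move=> Zg xZ qZ uq pq yq exy.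
case/splitPr: yq uq pq qZ => [[|a q1] q2] uq pq qZ; first by exists q2.
set p := x :: rcons (a :: q1) y.
have up : uniq p.
  by move: uq; rewrite /p -cat_cons -cat_rcons cat_uniq => /andP[].
have cp : cycle e p.
  rewrite /p /cycle rcons_path last_rcons e_sym exy andbT.
  move: pq; rewrite cat_path => /andP[/= /andP[-> pq1] /andP[ey _]].
  by rewrite rcons_path pq1.
have pZ : size p <= #|Z|.
  apply: uniq_size_le_card => //.
  by move: qZ; rewrite /p /= xZ all_cat all_rcons /= => /and4P[-> -> -> _].
have p3 : 3 <= size p by rewrite /p /= size_rcons.
by have := girth_ge (ex_intro _ p (And4 (erefl _) p3 up cp)); lia.
Qed.

(* Every nonempty set smaller than the girth contains a vertex of degree at
   most one: otherwise one could grow simple paths of unbounded length. *)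
Lemma low_degree_vertex (Z : {set T}) :
  #|Z| < g -> Z != set0 -> exists2 z, z \in Z & deg Z z <= 1.
Proof.
move=> Zg /set0Pn[z0 z0Z].
have [/exists_inP[z zZ dz]|/exists_inPn deg2] := boolP [exists z in Z, deg Z z <= 1].
  by exists z.
have {}deg2 z : z \in Z -> 1 < deg Z z by move/deg2; rewrite leqNgt negbK.
suff long n : exists x q, [/\ size q = n.+1, x \in Z, all (mem Z) q,
                             uniq (x :: q) & path e x q].
  have [x [q [sq xZ qZ uq _]]] := long #|Z|.
  by have := uniq_size_le_card (Z := Z) uq; rewrite /= xZ qZ sq => /(_ isT); lia.
elim: n => [|n [x [q [sq xZ qZ uq pq]]]].
  have : 0 < deg Z z0 by have := deg2 _ z0Z; lia.
  rewrite card_gt0 => /set0Pn[y]; rewrite inE => /andP[yZ ez0y].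
  exists y, [:: z0]; split => //=; first by rewrite z0Z.
    by rewrite inE andbT; apply: contraTneq ez0y => ->; rewrite e_irr.
  by rewrite e_sym ez0y.
case: q sq qZ uq pq => [//|h q] [sq] qZ uq pq.
have : ~~ ([set y in Z | e x y] \subset [set h]).
  by apply/negP => /subset_leq_card; rewrite cards1; have := deg2 _ xZ; rewrite /deg; lia.
case/subsetPn => y; rewrite !inE => /andP[yZ exy] yh.
have yq : y \notin x :: h :: q.
  rewrite in_cons negb_or; apply/andP; split.
    by apply: contraTneq exy => ->; rewrite e_irr.
  apply/negP => yq; have [q2 [hy _]] := path_no_chord Zg xZ qZ uq pq yq exy.
  by rewrite hy eqxx in yh.
exists y, [:: x, h & q]; split => //=; first by rewrite sq.
- by rewrite xZ.
- by rewrite yq.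
- by rewrite e_sym exy.
Qed.

Lemma sum_deg_le (Z : {set T}) :
  #|Z| < g -> \sum_(x in Z) deg Z x <= 2 * #|Z|.
Proof.
have [n cZ] : exists n, #|Z| = n by exists #|Z|.
elim: n Z cZ => [|n IH] Z cZ Zg.
  by move/eqP: cZ; rewrite cards_eq0 => /eqP ->; rewrite big_set0.
have [z zZ dz] := low_degree_vertex Zg (ltac:(by rewrite -card_gt0 cZ)).
set Z' := Z :\ z.
have cZ' : #|Z| = #|Z'|.+1 by rewrite (cardsD1 z Z) zZ.
have degD x : x \in Z' -> deg Z x = e x z + deg Z' x.
  move=> xZ'; rewrite /deg (cardsD1 z) !inE zZ /=; congr (_ + _).
  by apply: eq_card => y; rewrite !inE; case: (y == z); rewrite ?andbF.
have IH' : \sum_(x in Z') deg Z' x <= 2 * #|Z'| by apply: IH; lia.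
have edges_z : \sum_(x in Z') (e x z : nat) <= deg Z z.
  rewrite -big_mkcondr sum1_card /deg; apply: subset_leq_card.
  apply/subsetP => y; rewrite unfold_in /= !inE => /andP[/andP[_ yZ] eyz].
  by rewrite yZ e_sym.
rewrite (big_setD1 z zZ) /= -/Z' (eq_bigr _ degD) big_split /=; lia.
Qed.

Definition proper_on (Z : {set T}) (c : T -> 'I_3) : Prop :=
  forall x y, x \in Z -> y \in Z -> e x y -> c x != c y.

Definition extends_to (S Z : {set T}) (c : T -> 'I_3) : Prop :=
  exists c', proper_on Z c' /\ {in S, c' =1 c}.

Lemma proper_on_sub (Z Z' : {set T}) c :
  Z' \subset Z -> proper_on Z c -> proper_on Z' c.
Proof. by move=> /subsetP sZ pc x y /sZ xZ /sZ yZ; apply: pc. Qed.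

Lemma free_color (A : {set 'I_3}) : #|A| <= 2 -> exists b, b \notin A.
Proof.
move=> hA; have : 0 < #|~: A| by have := cardsC A; rewrite card_ord; lia.
by case/card_gt0P => b; rewrite inE; exists b.
Qed.

Lemma setDUK (X S : {set T}) : (X :\: S) :|: S = X :|: S.
Proof. by apply/setP => x; rewrite !inE; case: (x \in S); rewrite ?orbT ?andbT. Qed.

Lemma extend_low_degree (S X : {set T}) c x :
  x \in X :\: S -> deg (X :|: S) x <= 2 -> extends_to S ((X :\ x) :|: S) c ->
  extends_to S (X :|: S) c.
Proof.
move=> xXS dx [c' [pc' ac']].
have xS : x \notin S by move: xXS; rewrite inE => /andP[].
set N := [set y in X :|: S | e x y].
have [b bN] := @free_color (c' @: N) (leq_trans (leq_imset_card _ _) dx).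
have inZ' u : u \in X :|: S -> u != x -> u \in (X :\ x) :|: S.
  by rewrite !inE => /orP[|] -> ->; rewrite ?orbT.
have nbr u : u \in X :|: S -> e x u -> c' u != b.
  by move=> uZ exu; apply: contraNneq bN => <-; apply: imset_f; rewrite inE uZ.
exists (fun z => if z == x then b else c' z); split.
- move=> u v uZ vZ euv.
  case: (eqVneq u x) => [ux|ux]; case: (eqVneq v x) => [vx|vx].
  + by rewrite ux vx e_irr in euv.
  + by rewrite eq_sym nbr // -ux.
  + by rewrite nbr // -vx e_sym.
  + by apply: pc' => //; apply: inZ'.
- move=> z zS; have zx : z != x by apply: contraNneq xS => <-.
  by rewrite (negPf zx) ac'.
Qed.

Lemma few_high_degree (S X : {set T}) :
  #|X :|: S| < g -> {in X :\: S, forall x, 3 <= deg (X :|: S) x} ->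
  #|X :\: S| <= 2 * #|S|.
Proof.
move=> XSg high.
have := sum_deg_le XSg; rewrite (big_setID (X :\: S)) /=.
have -> : (X :|: S) :&: (X :\: S) = X :\: S.
  by apply/setP => x; rewrite !inE; case: (x \in S); case: (x \in X).
have sum3 : \sum_(i in X :\: S) 3 <= \sum_(i in X :\: S) deg (X :|: S) i.
  exact: leq_sum.
rewrite sum_nat_const in sum3.
have : #|X :|: S| <= #|X :\: S| + #|S| by rewrite -setDUK cardsU; lia.
lia.
Qed.

Lemma extend_from_small (S X : {set T}) c :
  #|X :|: S| < g ->
  (forall Y : {set T}, Y \subset X -> #|Y| <= 2 * #|S| -> extends_to S (Y :|: S) c) ->
  extends_to S (X :|: S) c.
Proof.
move: {2}#|X :\: S| (leqnn #|X :\: S|) => n; elim: n X => [|n IH] X XSn XSg small.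
  by rewrite -setDUK; apply: small; [exact: subsetDl | lia].
have [/exists_inP[x xXS dx]|/exists_inPn high] :=
  boolP [exists x in X :\: S, deg (X :|: S) x <= 2].
  apply: (extend_low_degree xXS dx); apply: IH.
  - have := cardsD1 x (X :\: S); rewrite xXS.
    have -> : (X :\: S) :\ x = (X :\ x) :\: S.
      by apply/setP => y; rewrite !inE; case: (y == x); case: (y \in S).
    lia.
  - by apply: leq_ltn_trans XSg; apply: subset_leq_card; apply: setSU; apply: subsetDl.
  - by move=> Y /subset_trans YX; apply: small; apply: YX; apply: subsetDl.
rewrite -setDUK; apply: small; first exact: subsetDl.
by apply: few_high_degree => // x /high; rewrite leqNgt negbK.
Qed.

(* Duplicator's invariant: c is M-robust on S when its restriction to S
   extends to X u S for every set X of at most M further vertices. *)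
Definition robust (M : nat) (S : {set T}) (c : T -> 'I_3) : Prop :=
  forall X : {set T}, #|X| <= M -> extends_to S (X :|: S) c.

Lemma robust_sub M (S S' : {set T}) c c' :
  S' \subset S -> {in S', c' =1 c} -> robust M S c -> robust M S' c'.
Proof.
move=> sS cc' rc X hX; have [c'' [pc'' ac'']] := rc X hX; exists c''; split.
  by apply: proper_on_sub pc''; apply: setUS.
by move=> x xS'; rewrite ac'' ?cc' //; apply: (subsetP sS).
Qed.

(* Below the girth, the empty colouring is robust: the induced subgraphs on
   at most M < g vertices are forests, hence 3-colourable. *)
Lemma robust_empty M c : M < g -> robust M set0 c.
Proof.
move=> Mg X XM; apply: extend_from_small; first by rewrite setU0; lia.
move=> Y _; rewrite cards0 leqn0 cards_eq0 => /eqP ->.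
by exists c; split => // x y; rewrite setU0 inE.
Qed.

Lemma robust_proper M (S : {set T}) c : robust M S c -> proper_on S c.
Proof.
move=> rc x y xS yS exy.
have [c' [pc' ac']] := rc set0 (leq_trans (eq_leq (cards0 _)) (leq0n M)).
by rewrite -!ac' //; apply: pc'; rewrite // set0U.
Qed.

Lemma card_bigcup_le (I : finType) (A : I -> {set T}) :
  #|\bigcup_i A i| <= \sum_i #|A i|.
Proof.
elim/big_rec2: _ => [|i X n _ Xn]; first by rewrite cards0.
by apply: leq_trans (leq_card_setU _ _) _; rewrite leq_add2l.
Qed.

(* If each colour b
   of v were refuted by some X_b, the union of v and the X_b (still below the
   girth) would be coloured by extend_from_small, and the colour it gives v
   would survive the refutation X_b of that very colour. *)
Lemma robust_extend_fresh M (S : {set T}) c v :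
  v \notin S -> 2 * #|S| <= M -> 3 * M + 1 + #|S| < g -> robust M S c ->
  exists b, robust M (v |: S) (fun z => if z == v then b else c z).
Proof.
move=> vS SM Mg rc; apply: NNPP => no_b.
have refute b : exists X : {set T}, #|X| <= M /\
    ~ extends_to (v |: S) (X :|: (v |: S)) (fun z => if z == v then b else c z).
  apply: NNPP => no_X; apply: no_b; exists b => X hX; apply: NNPP => nX.
  by apply: no_X; exists X.
have [Xb refXb] := fin_all_exists refute.
set X := v |: \bigcup_b Xb b.
have cardX : #|X| <= 3 * M + 1.
  rewrite cardsU1 addnC; apply: leq_add; last by case: (_ \notin _).
  apply: leq_trans (card_bigcup_le _) _.
  apply: (@leq_trans (\sum_(b : 'I_3) M)); last by rewrite sum_nat_const card_ord.
  by apply: leq_sum => b _; case: (refXb b).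
have [c' [pc' ac']] : extends_to S (X :|: S) c.
  apply: extend_from_small; first by rewrite cardsU; lia.
  by move=> Y _ YS; apply: rc; lia.
have [_ []] := refXb (c' v); exists c'; split.
  apply: proper_on_sub pc'; apply/subsetP => z.
  rewrite !inE => /orP[zX|/orP[->|->]]; rewrite ?orbT //.
  by apply/orP; left; apply/orP; right; apply/bigcupP; exists (c' v).
by move=> z; rewrite !inE; case: (eqVneq z v) => [->|_ /= /ac'].
Qed.

Lemma robust_extend M (S : {set T}) c a :
  2 * #|S| <= M -> 3 * M + 1 + #|S| < g -> robust M S c ->
  exists b, (a \in S -> b = c a) /\
            robust M (a |: S) (fun z => if z == a then b else c z).
Proof.
move=> SM Mg rc; have [aS|aS] := boolP (a \in S).
  exists (c a); split => //; apply: robust_sub rc.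
    by apply/subsetP => z; rewrite !inE => /orP[/eqP ->|].
  by move=> z _; case: (eqVneq z a) => [->|].
by have [b rb] := robust_extend_fresh aS SM Mg rc; exists b.
Qed.

End SparseGraphs.

Lemma holds_free_vars (T : Type) (e : rel T) (f : epf) (s s' : nat -> T) :
  {in free_vars f, s =1 s'} -> holds e s f -> holds e s' f.
Proof.
elim: f s s' => [x y|x y|f1 IH1 f2 IH2|f1 IH1 f2 IH2|x f1 IH] s s' ss' /=.
- by rewrite !ss' // !inE eqxx ?orbT.
- by rewrite !ss' // !inE eqxx ?orbT.
- by case=> h1 h2; split; [apply: IH1 h1 | apply: IH2 h2] => z hz;
    apply: ss'; rewrite mem_cat hz ?orbT.
- by case=> h; [left; apply: IH1 h | right; apply: IH2 h] => z hz;
    apply: ss'; rewrite mem_cat hz ?orbT.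
- case=> a h; exists a; apply: IH h => z hz.
  by case: (eqVneq z x) => // zx; apply: ss'; rewrite mem_filter zx.
Qed.

Lemma num_vars_gt0 (f : epf) : 0 < num_vars f.
Proof.
have [x xf] : exists x, x \in vars f.
  by elim: f => [x y|x y|f1 [x hx] f2 _|f1 [x hx] f2 _|x f1 _] /=;
    exists x; rewrite ?mem_cat ?hx // inE eqxx.
by rewrite /num_vars lt0n size_eq0; apply: contraTneq xf => E; rewrite -mem_undup E.
Qed.

Section DuplicatorStrategy.

Variables (T : finType) (e : rel T).
Hypotheses (e_sym : symmetric e) (e_irr : irreflexive e).
Variable g : nat.
Hypothesis girth_ge : forall l, has_cycle_of_length e l -> g <= l.
Variables (M k : nat) (V : seq nat).
Hypotheses (kM : 2 * k <= M) (Mg : 3 * M + k < g) (Vk : size V <= k).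

(* A position of the game: the pebbles V sit on s in G and on t in K_3, and
   t is read off s through an M-robust colouring of the pebbled vertices. *)
Definition good_position (s : nat -> T) (t : nat -> 'I_3) : Prop :=
  exists c, (forall x, x \in V -> t x = c (s x)) /\
            robust e M [set y in map s V] c.

Lemma good_position_start (v0 : T) :
  0 < k -> exists b, good_position (fun _ => v0) (fun _ => b).
Proof.
move=> k_pos.
have robust0 : robust e M set0 (fun _ => ord0).
  by apply: (robust_empty e_sym e_irr girth_ge); lia.
have S0M : 2 * #|@set0 T| <= M by rewrite cards0.
have S0g : 3 * M + 1 + #|@set0 T| < g by rewrite cards0; lia.
have [b [_ rb]] := robust_extend e_sym e_irr girth_ge v0 S0M S0g robust0.
exists b, (fun z => if z == v0 then b else ord0); split; first by rewrite eqxx.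
apply: robust_sub rb => //; apply/subsetP => y; rewrite !inE => /mapP[? _ ->].
by rewrite eqxx.
Qed.

Lemma good_position_move s t x a :
  x \in V -> good_position s t ->
  exists b, good_position (fun z => if z == x then a else s z)
                          (fun z => if z == x then b else t z).
Proof.
move=> xV [c [tc rc]].
set S0 := [set y in map s (filter (predC1 x) V)].
have S0k : #|S0| < k.
  apply: leq_trans Vk; rewrite cardsE; apply: leq_ltn_trans (card_size _) _.
  rewrite size_map size_filter -(count_predC (predC1 x) V) -addn1 leq_add2l.
  by rewrite -has_count; apply/hasP; exists x => //=; rewrite negbK.
have rc0 : robust e M S0 c.
  apply: robust_sub rc => // ; apply/subsetP => y; rewrite !inE.
  by case/mapP => z; rewrite mem_filter => /andP[_ zV] ->; apply: map_f.
have S0M : 2 * #|S0| <= M by lia.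
have S0g : 3 * M + 1 + #|S0| < g by lia.
have [b [bS0 rb]] := robust_extend e_sym e_irr girth_ge a S0M S0g rc0.
exists b, (fun z => if z == a then b else c z); split.
  move=> y yV; case: (eqVneq y x) => [yx|yx]; first by rewrite eqxx.
  rewrite tc //; case: (eqVneq (s y) a) => // sya.
  rewrite bS0 -sya // inE.
  by apply: map_f; rewrite mem_filter /= yx.
apply: robust_sub rb => //; apply/subsetP => y; rewrite !inE => /mapP[z zV ->].
case: (eqVneq z x) => [_|zx]; first by rewrite eqxx.
by rewrite map_f ?orbT // mem_filter /= zx.
Qed.

Lemma good_position_holds (f : epf) :
  {subset vars f <= V} ->
  forall s t, good_position s t -> holds e s f -> holds K3 t f.
Proof.
elim: f => [x y|x y|f1 IH1 f2 IH2|f1 IH1 f2 IH2|x f1 IH] fV s t pos /=.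
- have [xV yV] : x \in V /\ y \in V by split; apply: fV; rewrite !inE eqxx ?orbT.
  by case: pos => c [tc _]; rewrite !tc // => ->.
- have [xV yV] : x \in V /\ y \in V by split; apply: fV; rewrite !inE eqxx ?orbT.
  case: pos => c [tc /robust_proper pc] exy; rewrite /K3 !tc //.
  by apply: pc; rewrite ?inE ?map_f.
- have f1V : {subset vars f1 <= V} by move=> z zf; apply: fV; rewrite mem_cat zf.
  have f2V : {subset vars f2 <= V} by move=> z zf; apply: fV; rewrite mem_cat zf orbT.
  by case=> h1 h2; split; [apply: IH1 h1 | apply: IH2 h2].
- have f1V : {subset vars f1 <= V} by move=> z zf; apply: fV; rewrite mem_cat zf.
  have f2V : {subset vars f2 <= V} by move=> z zf; apply: fV; rewrite mem_cat zf orbT.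
  by case=> h; [left; apply: IH1 h | right; apply: IH2 h].
have xV : x \in V by apply: fV; rewrite inE eqxx.
have f1V : {subset vars f1 <= V} by move=> z zf; apply: fV; rewrite inE zf orbT.
case=> a ha; have [b pos'] := good_position_move a xV pos.
by exists b; apply: IH pos' ha.
Qed.

End DuplicatorStrategy.

Theorem theorem4 (T : finType) (e : rel T)
    (e_sym : symmetric e) (e_irr : irreflexive e)
    (chi_gt3 : forall n, colorable e n -> 3 < n)
    (w g : nat) (hw : is_W e w) (hg : is_girth e g) :
  g < 16 * w.
Proof.
have [[f [sent fw satG not_satK3]] _] := hw.
have [[[|v0 p] [sp p3 _ _]] girth_ge] := hg; first by rewrite -sp in p3.
rewrite ltnNge; apply/negP => wg; apply: not_satK3 => t.
have w_pos := leq_trans (num_vars_gt0 f) fw.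
have wM : 2 * w <= 2 * w by [].
have Mg : 3 * (2 * w) + w < g by lia.
have [b start] := good_position_start e_sym e_irr girth_ge wM Mg fw v0 w_pos.
apply: (holds_free_vars (s := fun _ => b)); first by rewrite sent.
apply: (good_position_holds e_sym e_irr girth_ge wM Mg fw _ start (satG _)).
by move=> z; rewrite mem_undup.
Qed.
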